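(* For any poset $P$ on $\{1,2,\ldots,n\}$ and field $k$, the three rings $R_P$, $\mathfrak{gr}(R_P)$ and $S/I^{\mathrm{init}}_P$ share the same $\mathbb{N}^n$-graded Hilbert series, namely $\sum_{f\in\mathcal{A}^{\mathrm{weak}}(P)}\mathbf{x}^f$.
   Context: All posets are finite. $\mathcal{A}^{\mathrm{weak}}(P)$ is the set of maps $f:\{1,\ldots,n\}\to\mathbb{N}$ with $f(i)\ge f(j)$ whenever $i<_Pj$; $\mathbf{x}^f=\prod_ix_i^{f(i)}$. $R_P\subseteq k[x_1,\ldots,x_n]$ is the $k$-span of the $\mathbf{x}^f$, $f\in\mathcal{A}^{\mathrm{weak}}(P)$, $\mathbb{N}^n$-graded with $\mathbf{x}^f$ of degree $f$. $\mathfrak{m}$ is the ideal spanned by $\mathbf{x}^f$ with $f\ne0$, and $\mathfrak{gr}(R_P)=\bigoplus_i\mathfrak{m}^i/\mathfrak{m}^{i+1}$ with the induced $\mathbb{N}^n$-grading. A connected order ideal is a nonempty downward-closed subset whose induced Hasse diagram is connected; $\mathcal{J}_{\mathrm{conn}}(P)$ is the set of these. Two connected order ideals intersect nontrivially if they are neither disjoint nor nested; $\Pi(P)$ is the set of such unordered pairs. $S=k[U_J]_{J\in\mathcal{J}_{\mathrm{conn}}(P)}$, $\mathbb{N}^n$-graded with $U_J$ of degree the indicator vector $\chi_J$, and $I^{\mathrm{init}}_P$ is the ideal of $S$ generated by $U_{J_1}U_{J_2}$ for $\{J_1,J_2\}\in\Pi(P)$. *)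

From HB Require Import structures.
From mathcomp Require Import all_boot all_order all_algebra.
From mathcomp Require Import mpoly.

Set Implicit Arguments.
Unset Strict Implicit.
Unset Printing Implicit Defensive.

Import GRing.Theory.
Local Open Scope ring_scope.

(* Posets on the ground set {0,...,n-1} (stands for {1,...,n}).       *)

Definition is_poset (n : nat) (le : rel 'I_n) : Prop :=
  [/\ reflexive le, antisymmetric le & transitive le].

Definition plt (n : nat) (le : rel 'I_n) (i j : 'I_n) : bool :=
  (i != j) && le i j.

(* weak P-partitions: f(i) >= f(j) whenever i <_P j; a map 'I_n -> nat
   is encoded as an exponent vector f : 'X_{1..n} *)
Definition weakP (n : nat) (le : rel 'I_n) (f : 'X_{1..n}) : bool :=
  [forall i, forall j, plt le i j ==> (f j <= f i)%N].

Definition pcover (n : nat) (le : rel 'I_n) (i j : 'I_n) : bool :=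
  plt le i j && ~~ [exists z, plt le i z && plt le z j].

Definition is_conn_ideal (n : nat) (le : rel 'I_n) (J : {set 'I_n}) : bool :=
  [&& J != set0,
      [forall x, forall y, (x \in J) && le y x ==> (y \in J)] &
      [forall x, forall y, (x \in J) && (y \in J) ==>
         connect (fun a b => [&& a \in J, b \in J &
                                 pcover le a b || pcover le b a]) x y]].

Definition nontriv_int (n : nat) (J1 J2 : {set 'I_n}) : bool :=
  [&& J1 :&: J2 != set0, ~~ (J1 \subset J2) & ~~ (J2 \subset J1)].

(* [qdim A B r]: for k-subspaces B <= A of V, dim_k (A / B) = r, i.e.
   there are r elements of A whose classes modulo B form a basis of A/B. *)
Definition qdim (K : fieldType) (V : lmodType K) (A B : V -> Prop) (r : nat)
  : Prop :=
  exists s : 'I_r -> V,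
    [/\ forall i, A (s i),
        forall c : 'I_r -> K, B (\sum_i c i *: s i) -> forall i, c i = 0
      & forall v, A v -> exists c : 'I_r -> K, B (v - \sum_i c i *: s i)].

Definition mon_span (K : fieldType) (n : nat) (F : 'X_{1..n} -> bool)
  (p : {mpoly K[n]}) : Prop :=
  exists s : seq ('X_{1..n} * K),
    (forall x, x \in s -> F x.1) /\ p = \sum_(x <- s) x.2 *: 'X_[x.1].

Definition RP (K : fieldType) (n : nat) (le : rel 'I_n) (p : {mpoly K[n]})
  : Prop := mon_span (weakP le) p.

Definition mP (K : fieldType) (n : nat) (le : rel 'I_n) (p : {mpoly K[n]})
  : Prop := mon_span (fun f => weakP le f && (f != 0%MM)) p.

Fixpoint mpow (K : fieldType) (n : nat) (le : rel 'I_n) (i : nat)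
  (p : {mpoly K[n]}) : Prop :=
  match i with
  | 0 => RP le p
  | i'.+1 => exists s : seq ({mpoly K[n]} * {mpoly K[n]}),
       (forall x, x \in s -> mpow le i' x.1 /\ mP le x.2) /\
       p = \sum_(x <- s) x.1 * x.2
  end.

Definition homR (K : fieldType) (n : nat) (d : 'X_{1..n})
  (p : {mpoly K[n]}) : Prop :=
  forall m, m \in msupp p -> m = d.

Definition hilb_RP (K : fieldType) (n : nat) (le : rel 'I_n)
  (d : 'X_{1..n}) (h : nat) : Prop :=
  qdim (fun p : {mpoly K[n]} => RP le p /\ homR d p) (fun p => p = 0) h.

(* Hilbert function of gr(R_P) = (+)_i m^i/m^(i+1) at d equals h:
   the degree-d piece is (+)_i (m^i)_d / (m^(i+1))_d, whose dimension is
   the (eventually zero) sum of the dimensions r i of the summands. *)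
Definition hilb_gr (K : fieldType) (n : nat) (le : rel 'I_n)
  (d : 'X_{1..n}) (h : nat) : Prop :=
  exists r : nat -> nat,
    (forall i, qdim (fun p : {mpoly K[n]} => mpow le i p /\ homR d p)
                    (fun p => mpow le i.+1 p /\ homR d p) (r i)) /\
    exists N, (forall i, (N <= i)%N -> r i = 0%N) /\
              (\sum_(i < N) r i)%N = h.

Definition ConnT (n : nat) (le : rel 'I_n) : finType :=
  {J : {set 'I_n} | is_conn_ideal le J}.

(* the variables of S are indexed by 'I_#|ConnT le|; variable i is U_J
   for J = Jvar i *)
Definition Jvar (n : nat) (le : rel 'I_n) (i : 'I_#|ConnT le|)
  : {set 'I_n} := val (@enum_val (ConnT le) predT i).

(* N^n-degree of the monomial prod_J U_J^(a_J): sum_J a_J chi_J *)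
Definition degS (n : nat) (le : rel 'I_n) (a : 'X_{1..#|ConnT le|})
  : 'X_{1..n} :=
  [multinom (\sum_(i < #|ConnT le|) a i * (j \in Jvar i))%N | j < n].

Definition homogS (K : fieldType) (n : nat) (le : rel 'I_n)
  (d : 'X_{1..n}) (p : {mpoly K[#|ConnT le|]}) : Prop :=
  forall a, a \in msupp p -> degS a = d.

Definition Iinit (K : fieldType) (n : nat) (le : rel 'I_n)
  (p : {mpoly K[#|ConnT le|]}) : Prop :=
  exists s : seq ({mpoly K[#|ConnT le|]} * ('I_#|ConnT le| * 'I_#|ConnT le|)),
    (forall x, x \in s -> nontriv_int (Jvar x.2.1) (Jvar x.2.2)) /\
    p = \sum_(x <- s) x.1 * ('X_x.2.1 * 'X_x.2.2).

Definition hilb_SI (K : fieldType) (n : nat) (le : rel 'I_n)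
  (d : 'X_{1..n}) (h : nat) : Prop :=
  qdim (fun p : {mpoly K[#|ConnT le|]} => homogS d p)
       (fun p => Iinit p /\ homogS d p) h.

From HB Require Import structures.
From mathcomp Require Import all_boot all_order all_algebra.
From mathcomp Require Import mpoly.
From mathcomp Require Import boolp.

(* The degree-d piece of R_P, and of every power m^i of its maximal ideal, is
   spanned by x^d alone, and x^d lies in m^i iff d is the sum of a weak
   P-partition and i nonzero ones. Hence the Hilbert function of R_P at d is
   [d is weak], and that of gr(R_P) telescopes to the same value.
   I^init_P is spanned by the monomials of S divisible by some U_J1 U_J2 with
   {J1, J2} in Pi(P), so S/I^init_P has the basis of "standard" monomials
   prod_J U_J^(a_J) whose support contains no such pair. Their degrees
   sum_J a_J chi_J are weak P-partitions, and each weak P-partition d is the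
   degree of exactly one of them: a standard monomial of degree d must contain
   U_C, where C is the connected component through x of the Hasse diagram of
   the support of d (C is the largest J of the monomial containing x), and
   d - chi_C is again a weak P-partition, of smaller size. *)

Set Implicit Arguments.
Unset Strict Implicit.
Unset Printing Implicit Defensive.

Import GRing.Theory.
Local Open Scope ring_scope.

Section QuotientDimension.
Variables (K : fieldType) (V : lmodType K).
Implicit Types (A B : V -> Prop) (e : V).

Lemma qdim0 A B : (forall v, A v -> B v) -> qdim A B 0.
Proof.
move=> AB; exists (fun _ => 0); split; [by case | by move=> c _ [] | ].
by move=> v /AB Bv; exists (fun _ => 0); rewrite big_ord0 subr0.
Qed.

Lemma qdim1 A B e :
  A e -> (forall c, B (c *: e) -> c = 0) ->
  (forall v, A v -> exists c, B (v - c *: e)) -> qdim A B 1.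
Proof.
move=> Ae Bfree Bspan; exists (fun _ => e); split => [//|c|v /Bspan [c Bc]].
  by rewrite big_ord1 => /Bfree c0 i; rewrite (ord1 i).
by exists (fun _ => c); rewrite big_ord1.
Qed.

Lemma qdim_line A B e (inA inB : Prop) :
  e != 0 ->
  (forall v, A v <-> exists c, v = c *: e /\ (inA \/ c = 0)) ->
  (forall v, B v <-> exists c, v = c *: e /\ (inB \/ c = 0)) ->
  (inB -> inA) -> qdim A B `[< inA /\ ~ inB >].
Proof.
move=> e0 defA defB inBA.
have Bline c : inB -> B (c *: e) by move=> hB; apply/defB; exists c; split=> //; left.
have B0 : B 0 by apply/defB; exists 0; rewrite scale0r; split => //; right.
have [[hA hB] | notAB] := asboolP (inA /\ ~ inB).
  apply: qdim1 => [|c|v].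
  - by apply/defA; exists 1; rewrite scale1r; split => //; left.
  - move=> /defB [c' [ce [//|c'0]]]; move/eqP: ce.
    by rewrite c'0 scale0r scaler_eq0 (negbTE e0) orbF => /eqP.
  - by case/defA => c [-> _]; exists c; rewrite subrr.
apply: qdim0 => v /defA [c [-> [hA | ->]]]; last by rewrite scale0r.
by apply: Bline; apply: contrapT => hB; apply: notAB.
Qed.

End QuotientDimension.

Lemma telescope_asbool (Q : nat -> Prop) N : (forall i, Q i.+1 -> Q i) ->
  (\sum_(i < N) `[< Q i /\ ~ Q i.+1 >] + `[< Q N >])%N = `[< Q 0 >].
Proof.
move=> QS; elim: N => [|N IH]; first by rewrite big_ord0.
rewrite big_ord_recr /= -addnA -IH; congr (_ + _)%N; have := QS N.
by case: (asboolP (Q N.+1)); case: (asboolP (Q N)); case: asboolP; tauto.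
Qed.

Section WeakPartitions.
Variables (n : nat) (le : rel 'I_n).
Local Open Scope nat_scope.
Implicit Types (d m : 'X_{1..n}).

Lemma plt_le a b : plt le a b -> le a b.
Proof. by case/andP. Qed.

Lemma weakPP d : reflect (forall i j, plt le i j -> d j <= d i) (weakP le d).
Proof.
apply: (iffP forallP) => [wd i j | wd i]; first exact/implyP/(forallP (wd i)).
by apply/forallP => j; apply/implyP/wd.
Qed.

Lemma weakP_le d i j : weakP le d -> plt le i j -> d j <= d i.
Proof. by move/weakPP; apply. Qed.

Lemma weakP_le_gt0 d i j : weakP le d -> le i j -> 0 < d j -> 0 < d i.
Proof.
move=> wd ij dj; have [<- //|ji] := eqVneq j i.
by apply: leq_trans dj (weakP_le wd _); rewrite /plt eq_sym ji.
Qed.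

Lemma weakPD d m : weakP le d -> weakP le m -> weakP le (d + m)%MM.
Proof.
move=> wd wm; apply/weakPP => i j ij; rewrite !mnmDE.
by rewrite leq_add // (weakP_le wd, weakP_le wm).
Qed.

End WeakPartitions.

Section MonomialSubspaces.
Variables (K : fieldType) (n : nat) (le : rel 'I_n).
Implicit Types (p v : {mpoly K[n]}) (d m : 'X_{1..n}).

Lemma mon_spanP (F : 'X_{1..n} -> bool) p :
  mon_span F p <-> {in msupp p, forall m, F m}.
Proof.
split=> [[s [sF ->]] m | suppF].
  move=> /msupp_sum_le /flattenP [t /mapP [x]]; rewrite filter_predT => xs ->.
  by move=> /msuppZ_le; rewrite msuppX mem_seq1 => /eqP ->; apply: sF.
exists [seq (m, p@_m) | m <- msupp p]; split; first by move=> _ /mapP [m /suppF ? ->].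
by rewrite big_map /= {1}[p]mpolyE.
Qed.

Lemma homR_mpolyXE d p : homR d p -> p = p@_d *: 'X_[d].
Proof.
move=> hd; apply/mpolyP => m; rewrite mcoeffZ mcoeffX.
have [<-|dm] := eqVneq d m; first by rewrite mulr1.
rewrite mulr0; apply: contraNeq dm; rewrite -mcoeff_msupp => /hd ->.
by rewrite eqxx.
Qed.

Lemma homR_scaleX d (c : K) : homR d (c *: 'X_[d]).
Proof. by move=> m /msuppZ_le; rewrite msuppX mem_seq1 => /eqP. Qed.

Lemma mpolyX_neq0 d : 'X_[d] != 0 :> {mpoly K[n]}.
Proof.
by apply/eqP => /(congr1 (mcoeff d)); rewrite mcoeffX mcoeff0 eqxx; apply/eqP/oner_neq0.
Qed.

(* The exponents of the monomials occurring in m^i. *)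
Fixpoint mpow_exp (i : nat) (m : 'X_{1..n}) : Prop :=
  match i with
  | 0 => weakP le m
  | i'.+1 => exists a b,
      [/\ mpow_exp i' a, weakP le b, b != 0%MM & m = (a + b)%MM]
  end.

Lemma mpow_expW i m : mpow_exp i.+1 m -> mpow_exp i m.
Proof.
elim: i m => [|i IH] m /= [a [b [ha wb b0 ->]]]; first exact: weakPD.
by exists a, b; split => //; apply: IH.
Qed.

Lemma mpow_exp_mdeg i m : mpow_exp i m -> (i <= mdeg m)%N.
Proof.
elim: i m => [//|i IH] m /= [a [b [ha _ b0 ->]]].
by rewrite mdegD -addn1 leq_add ?IH // lt0n mdeg_eq0.
Qed.

Lemma msupp_mpow i p m : mpow le i p -> m \in msupp p -> mpow_exp i m.
Proof.
elim: i p m => [|i IH] p m /=; first by move=> /mon_spanP; apply.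
move=> [s [hs ->]] /msupp_sum_le /flattenP [t /mapP [x]].
rewrite filter_predT => xs -> /msuppM_le /allpairsP [[m1 m2] /= [m1x m2x ->]].
have [/IH px1 /mon_spanP px2] := hs x xs; have /andP [w2 nz2] := px2 _ m2x.
by exists m1, m2; split => //; apply: px1.
Qed.

Lemma mpow0 i : mpow le i (0 : {mpoly K[n]}).
Proof.
case: i => [|i] /=; last by exists [::]; rewrite big_nil.
by apply/mon_spanP => m; rewrite mcoeff_msupp mcoeff0 eqxx.
Qed.

Lemma mpowZ i (c : K) p : mpow le i p -> mpow le i (c *: p).
Proof.
elim: i c p => [|i IH] c p /=.
  by move=> /mon_spanP Fp; apply/mon_spanP => m /msuppZ_le /Fp.
move=> [s [hs ->]]; exists [seq (c *: x.1, x.2) | x <- s]; split.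
  by move=> _ /mapP [x /hs [px1 px2] ->]; split => //; apply: IH.
by rewrite big_map scaler_sumr; apply: eq_bigr => x _; rewrite scalerAl.
Qed.

Lemma mpowX i m : mpow_exp i m -> mpow le i ('X_[m] : {mpoly K[n]}).
Proof.
elim: i m => [|i IH] m /=.
  by move=> wm; apply/mon_spanP => m'; rewrite msuppX mem_seq1 => /eqP ->.
move=> [a [b [ha wb b0 ->]]]; exists [:: ('X_[a], 'X_[b])]; split.
  move=> x; rewrite mem_seq1 => /eqP -> /=; split; first exact: IH.
  by apply/mon_spanP => m'; rewrite msuppX mem_seq1 => /eqP ->; rewrite wb b0.
by rewrite big_seq1 mpolyXD.
Qed.

Lemma mpow_homogE i d v :
  mpow le i v /\ homR d v <-> exists c, v = c *: 'X_[d] /\ (mpow_exp i d \/ c = 0).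
Proof.
split=> [[vi vd] | [c [-> [di | ->]]]]; last 2 first.
- by split; [apply/mpowZ/mpowX | apply: homR_scaleX].
- by rewrite scale0r; split; [apply: mpow0 | move=> m; rewrite msupp0].
exists v@_d; split; first exact: homR_mpolyXE.
have [->|nz] := eqVneq v@_d 0; [by right | left].
by apply: (msupp_mpow vi); rewrite mcoeff_msupp.
Qed.

Lemma hilb_RP_weakP d : hilb_RP K le d (weakP le d).
Proof.
have -> : weakP le d = `[< mpow_exp 0 d /\ ~ False >].
  by rewrite asbool_and asbool_neg asboolb asboolF ?andbT.
apply: qdim_line (mpolyX_neq0 d) _ _ _ => // v; first exact: (mpow_homogE 0).
split=> [->|[c [-> [[]|->]]]]; last by rewrite scale0r.
by exists 0; rewrite scale0r; split=> //; right.
Qed.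

Lemma hilb_gr_weakP d : hilb_gr K le d (weakP le d).
Proof.
exists (fun i => `[< mpow_exp i d /\ ~ mpow_exp i.+1 d >]); split.
  by move=> i; apply: qdim_line (mpolyX_neq0 d) _ _ (@mpow_expW i d) => v;
    apply: mpow_homogE.
exists (mdeg d).+1; split.
  by move=> i ltdi; case: asboolP => // [[/mpow_exp_mdeg]]; rewrite leqNgt ltdi.
have := telescope_asbool (mdeg d).+1 (fun i => @mpow_expW i d).
rewrite (asboolF (P := mpow_exp (mdeg d).+1 d)) ?addn0 => [->|/mpow_exp_mdeg].
  by rewrite /= asboolb.
by rewrite ltnn.
Qed.

End MonomialSubspaces.

Section HasseComponents.
Variables (n : nat) (le : rel 'I_n).
Local Open Scope nat_scope.
Implicit Types (d : 'X_{1..n}) (J : {set 'I_n}).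

Definition mnm_supp d : {set 'I_n} := [set j | 0 < d j].

Definition hasse_in J : rel 'I_n :=
  fun a b => [&& a \in J, b \in J & pcover le a b || pcover le b a].

Definition hasse_comp d x : {set 'I_n} :=
  [set y in mnm_supp d | connect (hasse_in (mnm_supp d)) x y].

Definition mnm_ind J : 'X_{1..n} := [multinom ((j \in J) : nat) | j < n].

Lemma hasse_in_sym J : ssrbool.symmetric (hasse_in J).
Proof. by move=> a b; rewrite /hasse_in andbCA orbC. Qed.

Lemma hasse_in_closed J : closed (hasse_in J) J.
Proof. by move=> a b /and3P [-> ->]. Qed.

Lemma conn_ideal_neq0 J : is_conn_ideal le J -> J != set0.
Proof. by case/and3P. Qed.

Lemma conn_ideal_down J x y : is_conn_ideal le J -> x \in J -> le y x -> y \in J.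
Proof.
case/and3P => _ /forallP /(_ x) /forallP /(_ y) /implyP xy _ xJ yx.
by apply: xy; rewrite xJ.
Qed.

Lemma conn_ideal_connect J x y : is_conn_ideal le J -> x \in J -> y \in J ->
  connect (hasse_in J) x y.
Proof.
case/and3P => _ _ /forallP /(_ x) /forallP /(_ y) /implyP xy xJ yJ.
by apply: xy; rewrite xJ.
Qed.

Lemma pcover_le a b : pcover le a b -> le a b.
Proof. by case/andP => /plt_le. Qed.

Lemma mnm_neq0_gt0 d : d != 0%MM -> exists x, 0 < d x.
Proof.
have [x dx _|d0] := pickP (fun x => 0 < d x); first by exists x.
by case/eqP; apply/mnmP => x; rewrite mnm0E; apply/eqP; rewrite -leqn0 leqNgt d0.
Qed.

Lemma mnm_indE J j : mnm_ind J j = (j \in J).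
Proof. by rewrite mnmE. Qed.

Hypothesis posetP : is_poset le.

Lemma poset_lexx x : le x x.
Proof. by case: posetP. Qed.

Lemma poset_anti x y : le x y -> le y x -> x = y.
Proof. by case: posetP => _ anti _ xy yx; apply: anti; rewrite xy. Qed.

Lemma poset_trans y x z : le x y -> le y z -> le x z.
Proof. by case: posetP => _ _; apply. Qed.

Definition interval y z : {set 'I_n} := [set k | le y k && le k z].

Lemma card_interval_ltr y w z :
  le y z -> le w z -> w != z -> #|interval y w| < #|interval y z|.
Proof.
move=> yz wz wz'; apply/proper_card/properP; split.
  by apply/subsetP => k; rewrite /interval !inE => /andP [-> /poset_trans]; apply.
exists z; first by rewrite /interval !inE yz poset_lexx.
by rewrite /interval !inE; apply: contra wz' => /andP [_ zw]; rewrite (poset_anti wz zw).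
Qed.

Lemma card_interval_ltl y w z :
  le y z -> le y w -> y != w -> #|interval w z| < #|interval y z|.
Proof.
move=> yz yw yw'; apply/proper_card/properP; split.
  by apply/subsetP => k; rewrite /interval !inE => /andP [/(poset_trans yw) -> ->].
exists y; first by rewrite /interval !inE yz poset_lexx.
by rewrite /interval !inE; apply: contra yw' => /andP [wy _]; rewrite (poset_anti yw wy).
Qed.

(* Induction on the size of [y, z], splitting at a point strictly in between. *)
Lemma le_connect_pcover y z : le y z -> connect [rel a b | pcover le a b && le b z] y z.
Proof.
have [m] := ubnP #|interval y z|; elim: m => // m IH in y z *; rewrite ltnS => yzm yz.
have [<-|yz'] := eqVneq y z; first exact: connect0.
have [cyz|] := boolP (pcover le y z); first by apply/connect1/andP; rewrite poset_lexx.
rewrite /pcover /plt yz' yz /= negbK.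
case/existsP => w /andP [/andP [yw' yw] /andP [wz' wz]].
apply: (connect_trans (y := w)); last first.
  by apply: IH wz; apply: leq_trans (card_interval_ltl yz yw yw') yzm.
have yw_path := IH _ _ (leq_trans (card_interval_ltr yz wz wz') yzm) yw.
apply: connect_sub yw_path => a b /andP [ab bw].
by apply/connect1/andP; split; last exact: poset_trans bw wz.
Qed.

Lemma le_connect_supp d y z :
  weakP le d -> le y z -> 0 < d z -> connect (hasse_in (mnm_supp d)) y z.
Proof.
move=> wd yz dz; apply: connect_sub (le_connect_pcover yz) => a b /andP [ab bz].
have db := weakP_le_gt0 wd bz dz; have da := weakP_le_gt0 wd (pcover_le ab) db.
by apply: connect1; rewrite /hasse_in !inE da db ab.
Qed.

Lemma mem_hasse_comp d x : 0 < d x -> x \in hasse_comp d x.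
Proof. by move=> dx; rewrite !inE dx connect0. Qed.

Lemma hasse_comp_gt0 d x y : y \in hasse_comp d x -> 0 < d y.
Proof. by rewrite !inE => /andP []. Qed.

Lemma hasse_comp_connect d x y z : y \in hasse_comp d x ->
  connect (hasse_in (mnm_supp d)) y z -> z \in hasse_comp d x.
Proof.
case/setIdP => yS xy yz; apply/setIdP; split; last exact: connect_trans xy yz.
by rewrite -(closed_connect (@hasse_in_closed _) yz).
Qed.

Lemma conn_ideal_sub_hasse_comp d x J w : is_conn_ideal le J ->
  {subset J <= mnm_supp d} -> w \in J -> w \in hasse_comp d x ->
  J \subset hasse_comp d x.
Proof.
move=> connJ JS wJ wC; apply/subsetP => y yJ; apply: hasse_comp_connect wC _.
apply: connect_sub (conn_ideal_connect connJ wJ yJ) => a b /and3P [aJ bJ ab].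
by apply: connect1; rewrite /hasse_in JS // JS.
Qed.

Lemma hasse_comp_sub d x J : x \in J ->
  (forall y z, y \in J -> hasse_in (mnm_supp d) y z -> z \in J) ->
  hasse_comp d x \subset J.
Proof.
move=> xJ Jcl; apply/subsetP => y; rewrite inE => /andP [_ /connectP [p xp ->]].
by elim: p x xJ xp => //= z p IH x xJ /andP [xz zp]; apply: IH (Jcl _ _ xJ xz) zp.
Qed.

Lemma hasse_comp_conn_ideal d x :
  weakP le d -> 0 < d x -> is_conn_ideal le (hasse_comp d x).
Proof.
move=> wd dx; set C := hasse_comp d x; have xC : x \in C := mem_hasse_comp dx.
have to_C a b : a \in C -> hasse_in (mnm_supp d) a b -> hasse_in C a b.
  move=> aC ab; have bC := hasse_comp_connect aC (connect1 ab).
  by case/and3P: ab => _ _ ab; rewrite /hasse_in aC bC.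
have path_C a p : a \in C -> path (hasse_in (mnm_supp d)) a p ->
    connect (hasse_in C) a (last a p).
  elim: p a => [|z p IH] a aC /=; first by rewrite connect0.
  move=> /andP [az zp]; have zC := hasse_comp_connect aC (connect1 az).
  exact: connect_trans (connect1 (to_C _ _ aC az)) (IH _ zC zp).
have from_x y : y \in C -> connect (hasse_in C) x y.
  by case/setIdP => _ /connectP [p xp ->]; apply: path_C.
apply/and3P; split; first by apply/set0Pn; exists x.
  apply/forallP => y; apply/forallP => z; apply/implyP => /andP [yC zy].
  apply: (hasse_comp_connect yC); rewrite (sym_connect_sym (@hasse_in_sym _)).
  exact: le_connect_supp wd zy (hasse_comp_gt0 yC).
apply/forallP => y; apply/forallP => z; apply/implyP => /andP [yC zC].
rewrite (connect_trans _ (from_x _ zC)) // (sym_connect_sym (@hasse_in_sym _)).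
exact: from_x.
Qed.

Definition hasse_peel d x : 'X_{1..n} := (d - mnm_ind (hasse_comp d x))%MM.

Lemma hasse_peelK d x : (hasse_peel d x + mnm_ind (hasse_comp d x))%MM = d.
Proof.
apply: submK; apply/mnm_lepP => j; rewrite mnm_indE.
by case: (boolP (j \in _)) => // /hasse_comp_gt0.
Qed.

Lemma hasse_peel_weakP d x : weakP le d -> 0 < d x -> weakP le (hasse_peel d x).
Proof.
move=> wd dx; have connC := hasse_comp_conn_ideal wd dx.
apply/weakPP => i j ij; rewrite !mnmBE !mnm_indE.
have [jC|jC] := boolP (j \in hasse_comp d x).
  by rewrite (conn_ideal_down connC jC (plt_le ij)) leq_sub2r // (weakP_le wd ij).
have [iC|_] := boolP (i \in hasse_comp d x); last by rewrite !subn0 (weakP_le wd ij).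
have [->//|dj] := posnP (d j); case/negP: jC.
exact: hasse_comp_connect iC (le_connect_supp wd (plt_le ij) dj).
Qed.

Lemma mdeg_hasse_peel d x : 0 < d x -> mdeg (hasse_peel d x) < mdeg d.
Proof.
move=> dx; rewrite -[X in _ < mdeg X](hasse_peelK d x) mdegD -[X in X < _]addn0.
rewrite ltn_add2l lt0n mdeg_eq0; apply/eqP => /mnmP /(_ x).
by rewrite mnm_indE mnm0E mem_hasse_comp.
Qed.

End HasseComponents.

Section StandardMonomials.
Variables (n : nat) (le : rel 'I_n).
Local Open Scope nat_scope.
Local Notation N := #|ConnT le|.
Local Notation J := (@Jvar n le).
Implicit Types (a b : 'X_{1..N}) (d : 'X_{1..n}).

(* Exponents of the standard monomials: those of S lying outside I^init_P. *)
Definition standard a : bool :=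
  [forall i, forall j, (0 < a i) && (0 < a j) ==>
     ~~ nontriv_int (J i) (J j)].

Lemma standardP a i j : standard a -> 0 < a i -> 0 < a j ->
  ~~ nontriv_int (J i) (J j).
Proof.
by move=> /forallP /(_ i) /forallP /(_ j) /implyP sa ai aj; apply: sa; rewrite ai.
Qed.

Lemma standard_subm a b : standard a -> standard (a - b)%MM.
Proof.
move=> sa; apply/forallP => i; apply/forallP => j; apply/implyP; rewrite !mnmBE.
case/andP => ai aj.
by apply: standardP sa (leq_trans ai (leq_subr _ _)) (leq_trans aj (leq_subr _ _)).
Qed.

Lemma nontriv_intC (J1 J2 : {set 'I_n}) : nontriv_int J1 J2 = nontriv_int J2 J1.
Proof. by rewrite /nontriv_int setIC; congr (_ && _); rewrite andbC. Qed.

Lemma nontriv_intxx (J : {set 'I_n}) : ~~ nontriv_int J J.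
Proof. by rewrite /nontriv_int subxx andbF. Qed.

Lemma nested_of_not_nontriv (J1 J2 : {set 'I_n}) : ~~ nontriv_int J1 J2 ->
  J1 :&: J2 != set0 -> (J1 \subset J2) || (J2 \subset J1).
Proof. by rewrite /nontriv_int => + J12; rewrite J12 /= negb_and !negbK. Qed.

Lemma Jvar_conn_ideal i : is_conn_ideal le (J i).
Proof. exact: valP (enum_val i). Qed.

Lemma Jvar_inj : injective J.
Proof. by move=> i j /val_inj /enum_val_inj. Qed.

Definition var_of (C : {set 'I_n}) (connC : is_conn_ideal le C) : 'I_N :=
  enum_rank (exist _ C connC : ConnT le).

Lemma Jvar_var_of C (connC : is_conn_ideal le C) : J (var_of connC) = C.
Proof. by rewrite /Jvar /var_of enum_rankK. Qed.

Lemma degSE a j : degS a j = \sum_i a i * (j \in J i).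
Proof. by rewrite mnmE. Qed.

Lemma degSD a b : degS (a + b)%MM = (degS a + degS b)%MM.
Proof.
apply/mnmP => j; rewrite mnmDE !degSE -big_split /=.
by apply: eq_bigr => i _; rewrite mnmDE mulnDl.
Qed.

Lemma degS0 : degS (0%MM : 'X_{1..N}) = 0%MM.
Proof. by apply/mnmP => j; rewrite degSE mnm0E big1 // => i _; rewrite mnm0E. Qed.

Lemma degSU c : degS U_(c)%MM = mnm_ind (J c).
Proof.
apply/mnmP => j; rewrite degSE mnm_indE (bigD1 c) //= mnm1E eqxx mul1n big1 ?addn0 //.
by move=> i ic; rewrite mnm1E eq_sym (negbTE ic).
Qed.

Lemma leq_degS a i j : j \in J i -> a i <= degS a j.
Proof. by move=> ji; rewrite degSE (bigD1 i) //= ji muln1 leq_addr. Qed.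

Lemma degS_gt0P a j : 0 < degS a j -> exists2 i, 0 < a i & j \in J i.
Proof.
have [i /andP [ai ji] _|none] := pickP (fun i => (0 < a i) && (j \in J i)).
  by exists i.
rewrite degSE big1 // => i _; have := none i.
by case: (posnP (a i)) => [->|_ /= ->] //; rewrite muln0.
Qed.

Lemma degS_weakP a : weakP le (degS a).
Proof.
apply/weakPP => i j ij; rewrite !degSE.
apply: leq_sum => k _; apply: leq_mul => //; case jk: (j \in J k) => //.
by rewrite (conn_ideal_down (Jvar_conn_ideal k) jk (plt_le ij)).
Qed.

Lemma degS_eq0 a : degS a = 0%MM -> a = 0%MM.
Proof.
move=> a0; apply/mnmP => i; rewrite mnm0E; apply/eqP; rewrite -leqn0 leqNgt.
have /set0Pn [y yi] := conn_ideal_neq0 (Jvar_conn_ideal i).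
by apply/negP => ai; have := leq_degS a yi; rewrite a0 mnm0E leqNgt ai.
Qed.

Lemma standard_addU a c : standard a ->
  (forall i, 0 < a i -> ~~ nontriv_int (J i) (J c)) -> standard (a + U_(c))%MM.
Proof.
move=> sa ac; have pos k : 0 < (a + U_(c))%MM k -> k = c \/ 0 < a k.
  by rewrite mnmDE mnm1E; case: eqVneq => [->|_]; [left | rewrite addn0; right].
apply/forallP => i; apply/forallP => j; apply/implyP.
case/andP=> /pos [-> | ai] /pos [-> | aj]; first exact: nontriv_intxx.
- by rewrite nontriv_intC; apply: ac.
- exact: ac.
- exact: standardP sa ai aj.
Qed.

Lemma subm_addU a c : 0 < a c -> (a - U_(c) + U_(c))%MM = a.
Proof. by move=> ac; rewrite submK // lep1mP -lt0n. Qed.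

Lemma standard_maximal_closed a c y z : standard a -> 0 < a c ->
  (forall k, 0 < a k -> J c \subset J k -> J k \subset J c) ->
  y \in J c -> hasse_in le (mnm_supp (degS a)) y z -> z \in J c.
Proof.
move=> sa ac maxc yc /and3P [_]; rewrite inE => /degS_gt0P [k ak zk] /orP [yz|zy].
  have yk := conn_ideal_down (Jvar_conn_ideal k) zk (pcover_le yz).
  have ck : J c :&: J k != set0 by apply/set0Pn; exists y; rewrite inE yc yk.
  have /orP [/(maxc k ak) kc | kc] := nested_of_not_nontriv (standardP sa ac ak) ck;
    exact: subsetP kc _ zk.
exact: conn_ideal_down (Jvar_conn_ideal c) yc (pcover_le zy).
Qed.

(* Among the variables of a through x, one with the largest ideal is exactly the
   Hasse component of x in the support of the degree. *)
Lemma standard_hasse_comp a x : standard a -> 0 < degS a x ->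
  exists2 c, 0 < a c & J c = hasse_comp le (degS a) x.
Proof.
move=> sa ax; have [i0 ai0 xi0] := degS_gt0P ax.
pose P i := (0 < a i) && (x \in J i); have P0 : P i0 by rewrite /P ai0.
have [c /andP [ac xc] maxc] := arg_maxnP (fun i => #|J i|) P0.
have incl k : 0 < a k -> J c \subset J k -> J k \subset J c.
  move=> ak ck; suff /eqP <- : J c == J k by [].
  by rewrite eqEcard ck; apply: maxc; rewrite /P ak (subsetP ck _ xc).
exists c => //; apply/eqP; rewrite eqEsubset; apply/andP; split.
  apply: conn_ideal_sub_hasse_comp (Jvar_conn_ideal c) _ xc (mem_hasse_comp _ ax).
  by move=> y yc; rewrite inE (leq_trans ac (leq_degS a yc)).
by apply: hasse_comp_sub => // y z; apply: standard_maximal_closed sa ac incl.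
Qed.

Lemma standard_degS_inj a b : standard a -> standard b -> degS a = degS b -> a = b.
Proof.
have [k] := ubnP (mdeg a); elim: k => // k IH in a b *; rewrite ltnS => ak sa sb ab.
have [a0|/mnm_neq0_gt0 [x ax]] := eqVneq (degS a) 0%MM.
  by rewrite (degS_eq0 a0) (degS_eq0 (etrans (esym ab) a0)).
have [c ac Jc] := standard_hasse_comp sa ax.
have bx : 0 < degS b x by rewrite -ab.
have [c' bc' Jc'] := standard_hasse_comp sb bx.
have cc' : c' = c by apply: Jvar_inj; rewrite Jc Jc' ab.
rewrite cc' in bc'; rewrite -(subm_addU ac) -(subm_addU bc'); congr (_ + _)%MM.
apply: IH; [|exact: standard_subm..|].
  by move: ak; rewrite -{1}(subm_addU ac) mdegD mdeg1 addn1.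
by apply: (@addIm _ (degS U_(c))); rewrite -!degSD !subm_addU.
Qed.

Hypothesis posetP : is_poset le.

Lemma standard_degS_surj d : weakP le d -> exists2 a, standard a & degS a = d.
Proof.
have [k] := ubnP (mdeg d); elim: k => // k IH in d *; rewrite ltnS => dk wd.
have [->|/mnm_neq0_gt0 [x dx]] := eqVneq d 0%MM.
  exists 0%MM; last exact: degS0.
  by apply/forallP => i; apply/forallP => j; rewrite mnm0E.
have connC := hasse_comp_conn_ideal posetP wd dx.
have [a sa ad] :=
  IH _ (leq_trans (mdeg_hasse_peel le dx) dk) (hasse_peel_weakP posetP wd dx).
exists (a + U_(var_of connC))%MM; last by rewrite degSD degSU ad Jvar_var_of hasse_peelK.
apply: standard_addU sa _ => i ai; rewrite Jvar_var_of.
apply/negP => /and3P [/set0Pn [w /setIP [wi wC]] /negP iC _]; apply: iC.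
apply: conn_ideal_sub_hasse_comp (Jvar_conn_ideal i) _ wi wC => y yi.
rewrite inE -(hasse_peelK le d x) mnmDE -ad.
exact: leq_trans ai (leq_trans (leq_degS a yi) (leq_addr _ _)).
Qed.

End StandardMonomials.

Section InitialIdeal.
Variables (K : fieldType) (n : nat) (le : rel 'I_n).
Local Notation N := #|ConnT le|.
Implicit Types (p q v : {mpoly K[N]}) (a : 'X_{1..N}).

Lemma Iinit0 : Iinit (0 : {mpoly K[N]}).
Proof. by exists [::]; rewrite big_nil. Qed.

Lemma IinitD p q : Iinit p -> Iinit q -> Iinit (p + q).
Proof.
move=> [s [hs ->]] [t [ht ->]]; exists (s ++ t); split; last by rewrite big_cat.
by move=> x; rewrite mem_cat => /orP [/hs|/ht].
Qed.

Lemma IinitZ (c : K) p : Iinit p -> Iinit (c *: p).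
Proof.
move=> [s [hs ->]]; exists [seq (c *: x.1, x.2) | x <- s]; split.
  by move=> _ /mapP [x /hs ? ->].
by rewrite big_map scaler_sumr; apply: eq_bigr => x _; rewrite scalerAl.
Qed.

Lemma Iinit_mpolyX a : ~~ standard a -> Iinit ('X_[a] : {mpoly K[N]}).
Proof.
case/forallPn => i /forallPn [j]; rewrite negb_imply negbK.
case/andP => /andP [ai aj] ijnt.
have ij : i != j by apply: contraTneq ijnt => ->; apply: nontriv_intxx.
have Uj : (U_(j) <= a)%MM by rewrite lep1mP -lt0n.
have Ui : (U_(i) <= a - U_(j))%MM.
  by rewrite lep1mP mnmBE mnm1E [j == i]eq_sym (negbTE ij) subn0 -lt0n.
exists [:: ('X_[a - U_(j) - U_(i)], (i, j))]; split.
  by move=> x; rewrite mem_seq1 => /eqP ->.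
by rewrite big_seq1 /= -!mpolyXD addmA !submK.
Qed.

Lemma mcoeff_Iinit p a : Iinit p -> standard a -> p@_a = 0.
Proof.
move=> [s [hs ->]] sa; rewrite raddf_sum; apply: big1_seq => x /andP [_ xs].
apply: contraTeq sa; rewrite -mcoeff_msupp.
move=> /msuppM_le /allpairsP [[m1 m2] [_ m2x ->]].
move: m2x; rewrite /= -mpolyXD msuppX mem_seq1 => /eqP ->.
set m := (m1 + _)%MM.
have m_1 : (0 < m x.2.1)%N by rewrite !mnmDE !mnm1E eqxx /= addnS.
have m_2 : (0 < m x.2.2)%N by rewrite !mnmDE !mnm1E eqxx addn1 addnS.
by apply/negP => sm; have := standardP sm m_1 m_2; rewrite hs.
Qed.

Hypothesis posetP : is_poset le.

Lemma hilb_SI_weakP d : hilb_SI K le d (weakP le d).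
Proof.
case: (boolP (weakP le d)) => [wd|nwd].
  have [a sa ad] := standard_degS_surj posetP wd.
  apply: (qdim1 (e := 'X_[a])) => [m|c [/mcoeff_Iinit /(_ sa) + _]|v vd].
  - by rewrite msuppX mem_seq1 => /eqP ->.
  - by rewrite mcoeffZ mcoeffX eqxx mulr1.
  exists v@_a; set w := v - v@_a *: 'X_[a].
  have wd' : homogS d w.
    move=> m /msuppB_le; rewrite mem_cat => /orP [/vd //|].
    by move/msuppZ_le; rewrite msuppX mem_seq1 => /eqP ->.
  split=> //; rewrite [w]mpolyE big_seq.
  apply: big_ind => //; [exact: Iinit0 | exact: IinitD |].
  move=> m mw; apply/IinitZ/Iinit_mpolyX/negP => sm.
  have ma : m = a := standard_degS_inj sm sa (etrans (wd' m mw) (esym ad)).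
  by move: mw; rewrite ma mcoeff_msupp mcoeffB mcoeffZ mcoeffX eqxx mulr1 subrr eqxx.
apply: qdim0 => v vd; split; last exact: vd.
suff -> : v = 0 by apply: Iinit0.
apply/mpolyP => m; rewrite mcoeff0; apply: contraTeq nwd.
by rewrite -mcoeff_msupp negbK => /vd <-; apply: degS_weakP.
Qed.

End InitialIdeal.

Theorem proposition6p2 (k : fieldType) (n : nat) (le : rel 'I_n) :
  is_poset le ->
  forall d : 'X_{1..n},
    [/\ hilb_RP k le d (weakP le d),
        hilb_gr k le d (weakP le d)
      & hilb_SI k le d (weakP le d)].
Proof.
move=> posetP d.
by split; [apply: hilb_RP_weakP | apply: hilb_gr_weakP | apply: hilb_SI_weakP].
Qed.
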